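(* For every $X\in B(\mathcal H)^d$ there exists a unitary $u\in B(\mathcal H)$ such that for every $k\ge0$, $$u\big(\mathrm{span}\{e_1,\dots,e_{k+1}\}\big)\subset V_k^X\quad\text{and}\quad u^*\big(V_k^X\big)\subset\mathrm{span}\{e_1,\dots,e_{\alpha(k,d)}\}.$$ That is, every $X\in B(\mathcal H)^d$ has a shift form.
   Context: $\mathcal H$ is an infinite-dimensional separable complex Hilbert space with a fixed orthonormal basis $e_1,e_2,\dots$, and $M\in B(\mathcal H)$ is the shift $Me_j=e_{j+1}$. For $X=(X^1,\dots,X^d)\in B(\mathcal H)^d$, $(X,M)$ denotes the $(d+1)$-tuple $(X^1,\dots,X^d,M)$. $\mathcal P(k,d)$ is the complex vector space of polynomials in $d+1$ noncommuting variables of degree at most $k$, and $\alpha(k,d)=\dim\mathcal P(k,d)$. For $k\ge0$, $V_k^X:=\{p(X,M)e_1: p\in\mathcal P(k,d)\}\subset\mathcal H$. A shift form of $X$ is a tuple $\widetilde X=u^*Xu=(u^*X^1u,\dots,u^*X^du)$ where $u$ is a unitary satisfying the two displayed inclusions for all $k\ge0$. *)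

(* classical reals. H is modelled concretely as l^2(N, C),
   with e_{j+1} the j-th standard unit vector (0-indexed). *)
From Stdlib Require Import Reals List Arith.
Open Scope R_scope.

Definition C : Type := (R * R)%type.
Definition C0 : C := (0, 0).
Definition C1 : C := (1, 0).
Definition Cadd (a b : C) : C := (fst a + fst b, snd a + snd b).
Definition Cmul (a b : C) : C :=
  (fst a * fst b - snd a * snd b, fst a * snd b + snd a * fst b).
Definition Cconj (a : C) : C := (fst a, - snd a).
Definition Cnorm2 (a : C) : R := fst a * fst a + snd a * snd a.

Definition Csum (f : nat -> C) (z : C) : Prop :=
  infinite_sum (fun n => fst (f n)) (fst z) /\
  infinite_sum (fun n => snd (f n)) (snd z).

Definition vec : Type := nat -> C.
Definition op : Type := vec -> vec.

Definition norm2_sum (x : vec) (s : R) : Prop :=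
  infinite_sum (fun n => Cnorm2 (x n)) s.
Definition in_H (x : vec) : Prop := exists s, norm2_sum x s.

Definition inner (x y : vec) (z : C) : Prop :=
  Csum (fun n => Cmul (x n) (Cconj (y n))) z.

Definition bounded_op (T : op) : Prop :=
  (forall x, in_H x -> in_H (T x)) /\
  (forall (a : C) x y, in_H x -> in_H y ->
     forall n, T (fun m => Cadd (Cmul a (x m)) (y m)) n
               = Cadd (Cmul a (T x n)) (T y n)) /\
  (exists K : R, forall x s t, in_H x -> norm2_sum x s ->
      norm2_sum (T x) t -> t <= K * s).

Definition adjoint (T S : op) : Prop :=
  bounded_op T /\ bounded_op S /\
  forall x y z, in_H x -> in_H y -> (inner (T x) y z <-> inner x (S y) z).

Definition unitary (u us : op) : Prop :=
  adjoint u us /\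
  (forall x, in_H x -> forall n, u (us x) n = x n) /\
  (forall x, in_H x -> forall n, us (u x) n = x n).

Definition e1 : vec := fun n => if Nat.eqb n 0 then C1 else C0.
Definition Mshift : op := fun x n =>
  match n with O => C0 | S m => x m end.

Definition in_span_e (m : nat) (x : vec) : Prop :=
  forall n, (m <= n)%nat -> x n = C0.

(** Evaluation of the noncommutative monomial (word) w in the d+1 variables
    (X^1,...,X^d,M) at v: letter i < d stands for X^(i+1) (= X i), letter d
    for M; the word [a1;...;an] denotes Y_{a1} Y_{a2} ... Y_{an}. *)
Definition weval (d : nat) (X : nat -> op) (w : list nat) (v : vec) : vec :=
  fold_right (fun a acc => (if Nat.ltb a d then X a else Mshift) acc) v w.

Definition poly_in (k d : nat) (p : list (C * list nat)) : Prop :=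
  Forall (fun cw => (length (snd cw) <= k)%nat /\
                    Forall (fun a => (a <= d)%nat) (snd cw)) p.

Definition peval (d : nat) (X : nat -> op) (p : list (C * list nat)) (v : vec)
  : vec := fun n =>
  fold_right (fun cw acc => Cadd (Cmul (fst cw) (weval d X (snd cw) v n)) acc)
             C0 p.

Definition in_Vk (d : nat) (X : nat -> op) (k : nat) (v : vec) : Prop :=
  exists p, poly_in k d p /\ forall n, v n = peval d X p e1 n.

(** alpha(k,d) = dim P(k,d) = sum_{j=0}^k (d+1)^j. *)
Fixpoint alpha (k d : nat) : nat :=
  match k with
  | O => 1
  | S k' => alpha k' d + Nat.pow (S d) (S k')
  end.

(** Enumerate all words of length 0, 1, 2, ... in the d+1 letters and run
    Gram-Schmidt on the vectors [w(X,M) e_1].  Because [M^i e_1 = e_(i+1)] is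
    among them, the first [alpha k d] words already span [e_1, ..., e_(k+1)],
    so the resulting orthonormal family [f_0, f_1, ...] is complete and each
    [e_(n+1)] only involves finitely many [f_j].  The unitary
    [u x = sum_j x_j f_j] then maps [e_1, ..., e_(k+1)] into [V_k^X] (whose
    vectors are combinations of the first [alpha k d] generators), and
    [u^* v = (<v, f_j>)_j] vanishes beyond index [alpha k d] for [v] in
    [V_k^X]. *)

From Stdlib Require Import Reals List Arith Lia Lra Psatz FunctionalExtensionality.
From Coquelicot Require Import Rbar Hierarchy Lim_seq Series.
Import ListNotations.
Open Scope R_scope.

Definition Copp (a : C) : C := (- fst a, - snd a).
Definition Csub (a b : C) : C := Cadd a (Copp b).
Definition Creal (r : R) : C := (r, 0).
Definition Ci : C := (0, 1).

Lemma C_ext (a b : C) : fst a = fst b -> snd a = snd b -> a = b.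
Proof. destruct a, b; simpl; intros; subst; auto. Qed.

Ltac Cunfold := repeat match goal with a : C |- _ => destruct a end;
  unfold Csub, Cadd, Cmul, Copp, Cconj, Cnorm2, C0, C1 in *; simpl in *.

Lemma C_ring : ring_theory C0 C1 Cadd Cmul Csub Copp (@eq C).
Proof. constructor; intros; apply C_ext; Cunfold; ring. Qed.
Add Ring C_ring : C_ring.

Lemma Cnorm2_nonneg a : 0 <= Cnorm2 a.
Proof. Cunfold. nra. Qed.

Lemma Cmul_conj a : Cmul a (Cconj a) = Creal (Cnorm2 a).
Proof. apply C_ext; Cunfold; ring. Qed.

Lemma Cconj_add a b : Cconj (Cadd a b) = Cadd (Cconj a) (Cconj b).
Proof. apply C_ext; Cunfold; ring. Qed.

Lemma Cconj_mul a b : Cconj (Cmul a b) = Cmul (Cconj a) (Cconj b).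
Proof. apply C_ext; Cunfold; ring. Qed.

Lemma Cconj_0 : Cconj C0 = C0.
Proof. apply C_ext; Cunfold; ring. Qed.

Lemma Cnorm2_mul a b : Cnorm2 (Cmul a b) = Cnorm2 a * Cnorm2 b.
Proof. Cunfold. ring. Qed.

Lemma Cnorm2_conj a : Cnorm2 (Cconj a) = Cnorm2 a.
Proof. Cunfold. ring. Qed.

Lemma Cnorm2_0 : Cnorm2 C0 = 0.
Proof. Cunfold. ring. Qed.

Lemma Cnorm2_eq0 a : Cnorm2 a = 0 -> a = C0.
Proof. intro H. apply C_ext; Cunfold; nra. Qed.

Lemma Cnorm2_add_le a b : Cnorm2 (Cadd a b) <= 2 * Cnorm2 a + 2 * Cnorm2 b.
Proof.
  Cunfold. pose proof (Rle_0_sqr (r - r1)); pose proof (Rle_0_sqr (r0 - r2)).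
  unfold Rsqr in *. nra.
Qed.

Lemma Cnorm2_le_all_pos (z : C) : (forall eps, 0 < eps -> Cnorm2 z <= eps) -> z = C0.
Proof.
  intros H. apply Cnorm2_eq0. pose proof (Cnorm2_nonneg z).
  destruct (Req_dec (Cnorm2 z) 0); auto. specialize (H (Cnorm2 z / 2) ltac:(lra)). lra.
Qed.

(** [rsum m a = a 0 + ... + a (m-1)]; unlike [sum_n] it has an empty case. *)
Fixpoint rsum (m : nat) (a : nat -> R) : R :=
  match m with O => 0 | S m' => rsum m' a + a m' end.

Lemma sum_n_rsum (a : nat -> R) N : sum_n a N = rsum (S N) a.
Proof.
  induction N; simpl.
  - rewrite sum_O. ring.
  - rewrite sum_Sn, IHN. simpl. unfold plus; simpl. ring.
Qed.

Lemma rsum_ext m a b : (forall n, (n < m)%nat -> a n = b n) -> rsum m a = rsum m b.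
Proof. induction m; simpl; intros; auto. rewrite IHm, H; auto. Qed.

Lemma rsum_nonneg m a : (forall n, 0 <= a n) -> 0 <= rsum m a.
Proof. induction m; simpl; intros; try lra. specialize (IHm H). specialize (H m). lra. Qed.

Lemma rsum_le m a b : (forall n, (n < m)%nat -> a n <= b n) -> rsum m a <= rsum m b.
Proof.
  induction m; simpl; intros H; try lra.
  assert (rsum m a <= rsum m b) by (apply IHm; intros; apply H; lia).
  assert (a m <= b m) by (apply H; lia). lra.
Qed.

Lemma rsum_zero_tail m m' a : (forall n, (m <= n)%nat -> a n = 0) -> (m <= m')%nat ->
  rsum m' a = rsum m a.
Proof. intros H Hm. induction Hm; auto. simpl. rewrite IHHm, H; try lia. ring. Qed.

Lemma rsum_plus m a b : rsum m (fun n => a n + b n) = rsum m a + rsum m b.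
Proof. induction m; simpl; try ring. rewrite IHm. ring. Qed.

Lemma rsum_swap m k (a : nat -> nat -> R) :
  rsum m (fun i => rsum k (fun j => a i j)) = rsum k (fun j => rsum m (fun i => a i j)).
Proof.
  induction m; simpl.
  - induction k; simpl; auto. rewrite <- IHk. ring.
  - rewrite IHm, rsum_plus. reflexivity.
Qed.

Lemma rsum_const m r : rsum m (fun _ => r) = INR m * r.
Proof. induction m; simpl rsum. simpl; ring. rewrite IHm, S_INR. ring. Qed.

Lemma rsum_single m k (a : nat -> R) : (k < m)%nat -> (forall n, n <> k -> a n = 0) ->
  rsum m a = a k.
Proof.
  intros Hk Hz. rewrite (rsum_zero_tail (S k) m); [simpl | intros; apply Hz; lia | lia].
  rewrite (rsum_ext k a (fun _ => 0)) by (intros; apply Hz; lia).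
  rewrite rsum_const. ring.
Qed.

Lemma is_series_rsum (a : nat -> R) m :
  (forall n, (m <= n)%nat -> a n = 0) -> is_series a (rsum m a).
Proof.
  intros H. enough (Hl : is_lim_seq (sum_n a) (rsum m a)) by exact Hl.
  apply (is_lim_seq_ext_loc (fun _ => rsum m a)).
  - exists m. intros N HN. rewrite sum_n_rsum. symmetry. apply rsum_zero_tail; auto.
  - apply is_lim_seq_const.
Qed.

Lemma Series_zero : Series (fun _ => 0) = 0.
Proof. apply is_series_unique. exact (is_series_rsum (fun _ => 0) 0%nat (fun _ _ => eq_refl)). Qed.

Lemma is_series_lin (a b : nat -> R) (c la lb : R) :
  is_series a la -> is_series b lb -> is_series (fun n => c * a n + b n) (c * la + lb).
Proof.
  intros Ha Hb. apply (is_series_plus (fun n => c * a n) b); auto.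
  apply (is_series_scal_l c a la Ha).
Qed.

Lemma ex_series_lin (a b : nat -> R) (c : R) :
  ex_series a -> ex_series b -> ex_series (fun n => c * a n + b n).
Proof. intros [la Ha] [lb Hb]. exists (c * la + lb). apply is_series_lin; auto. Qed.

Lemma ex_series_scal (a : nat -> R) (c : R) : ex_series a -> ex_series (fun n => c * a n).
Proof. intros [l H]. exists (c * l). apply (is_series_scal_l c a l H). Qed.

Lemma ex_series_Rabs_le (a b : nat -> R) :
  (forall n, Rabs (a n) <= b n) -> ex_series b -> ex_series a.
Proof. intros H Hb. apply (ex_series_le a b); auto. Qed.

Lemma Series_lin (a b : nat -> R) (c : R) :
  ex_series a -> ex_series b -> Series (fun n => c * a n + b n) = c * Series a + Series b.
Proof. intros Ha Hb. apply is_series_unique. apply is_series_lin; apply Series_correct; auto. Qed.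

Lemma rsum_le_Series (a : nat -> R) m : (forall n, 0 <= a n) -> ex_series a ->
  rsum m a <= Series a.
Proof.
  intros Hp He.
  assert (HS : forall k, rsum (S k) a <= Series a).
  { intro k. rewrite <- sum_n_rsum. apply (is_lim_seq_incr_compare (sum_n a)).
    - apply Series_correct; auto.
    - intros j. rewrite !sum_n_rsum. simpl. specialize (Hp (S j)). lra. }
  destruct m as [|m]; auto.
  specialize (HS 0%nat). specialize (Hp 0%nat). simpl in *. lra.
Qed.

Lemma Series_le_of_rsum_le (a : nat -> R) M : ex_series a -> (forall m, rsum m a <= M) ->
  Series a <= M.
Proof.
  intros He Hb. apply (is_lim_seq_le (sum_n a) (fun _ => M) (Series a) M).
  - intros n. rewrite sum_n_rsum. apply Hb.
  - apply Series_correct; auto.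
  - apply is_lim_seq_const.
Qed.

Lemma ex_series_of_rsum_le (a : nat -> R) M : (forall n, 0 <= a n) ->
  (forall m, rsum m a <= M) -> ex_series a.
Proof.
  intros Hp Hb. destruct (ex_finite_lim_seq_incr (sum_n a) M) as [l Hl].
  - intros n. rewrite !sum_n_rsum. simpl. specialize (Hp (S n)). lra.
  - intros n. rewrite sum_n_rsum. apply Hb.
  - exists l. exact Hl.
Qed.

Lemma Series_rsum_close (a : nat -> R) (eps : R) : ex_series a -> 0 < eps ->
  exists m, forall m', (m <= m')%nat -> Rabs (Series a - rsum m' a) < eps.
Proof.
  intros He Heps. assert (H : is_lim_seq (sum_n a) (Series a)) by exact (Series_correct a He).
  apply is_lim_seq_spec in H. destruct (H (mkposreal eps Heps)) as [N HN].
  exists (S N). intros m' Hm. destruct m' as [|m']; try lia.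
  rewrite <- sum_n_rsum, Rabs_minus_sym. apply HN. lia.
Qed.

(** * The Hilbert space l^2 *)

Definition abs2 (x : vec) : nat -> R := fun n => Cnorm2 (x n).
Definition l2 (x : vec) : Prop := ex_series (abs2 x).
Definition norm2 (x : vec) : R := Series (abs2 x).
Definition dot_re (x y : vec) (n : nat) : R := fst (Cmul (x n) (Cconj (y n))).
Definition dot_im (x y : vec) (n : nat) : R := snd (Cmul (x n) (Cconj (y n))).
Definition dot (x y : vec) : C := (Series (dot_re x y), Series (dot_im x y)).
Definition vlin (a : C) (x y : vec) : vec := fun n => Cadd (Cmul a (x n)) (y n).
Definition zerov : vec := fun _ => C0.

Lemma in_H_l2 x : in_H x <-> l2 x.
Proof. unfold in_H, norm2_sum; split; intros [s Hs]; exists s; apply is_series_Reals; auto. Qed.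

Lemma norm2_sum_norm2 x s : norm2_sum x s -> s = norm2 x.
Proof. intros H. apply is_series_Reals in H. symmetry. apply is_series_unique. exact H. Qed.

Lemma abs2_nonneg x n : 0 <= abs2 x n.
Proof. apply Cnorm2_nonneg. Qed.

Lemma l2_zerov : l2 zerov.
Proof.
  exists (rsum 0 (abs2 zerov)). apply is_series_rsum. intros. apply Cnorm2_0.
Qed.

Lemma norm2_zerov : norm2 zerov = 0.
Proof.
  unfold norm2. rewrite <- Series_zero. apply Series_ext. intros. apply Cnorm2_0.
Qed.

Lemma l2_vlin a x y : l2 x -> l2 y -> l2 (vlin a x y).
Proof.
  intros Hx Hy. apply (ex_series_Rabs_le _ (fun n => (2 * Cnorm2 a) * abs2 x n + 2 * abs2 y n)).
  - intros n. rewrite Rabs_pos_eq by apply abs2_nonneg. unfold abs2, vlin.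
    eapply Rle_trans; [apply Cnorm2_add_le|]. rewrite Cnorm2_mul. lra.
  - apply ex_series_lin; auto. apply ex_series_scal; auto.
Qed.

Lemma ex_series_dot_re x y : l2 x -> l2 y -> ex_series (dot_re x y).
Proof.
  intros Hx Hy. apply (ex_series_Rabs_le _ (fun n => /2 * abs2 x n + /2 * abs2 y n)).
  - intros n. unfold dot_re, abs2. destruct (x n) as [a b], (y n) as [c e].
    unfold Cmul, Cconj, Cnorm2; simpl. apply Rabs_le.
    pose proof (Rle_0_sqr (a - c)); pose proof (Rle_0_sqr (b - e));
    pose proof (Rle_0_sqr (a + c)); pose proof (Rle_0_sqr (b + e)); unfold Rsqr in *.
    split; nra.
  - apply ex_series_lin; auto. apply ex_series_scal; auto.
Qed.

Lemma ex_series_dot_im x y : l2 x -> l2 y -> ex_series (dot_im x y).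
Proof.
  intros Hx Hy. apply (ex_series_Rabs_le _ (fun n => /2 * abs2 x n + /2 * abs2 y n)).
  - intros n. unfold dot_im, abs2. destruct (x n) as [a b], (y n) as [c e].
    unfold Cmul, Cconj, Cnorm2; simpl. apply Rabs_le.
    pose proof (Rle_0_sqr (a - e)); pose proof (Rle_0_sqr (b - c));
    pose proof (Rle_0_sqr (a + e)); pose proof (Rle_0_sqr (b + c)); unfold Rsqr in *.
    split; nra.
  - apply ex_series_lin; auto. apply ex_series_scal; auto.
Qed.

Lemma inner_dot x y : l2 x -> l2 y -> inner x y (dot x y).
Proof.
  intros Hx Hy. split; simpl; apply is_series_Reals; apply Series_correct;
  [apply ex_series_dot_re | apply ex_series_dot_im]; auto.
Qed.

Lemma inner_eq_dot x y z : inner x y z -> z = dot x y.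
Proof.
  intros [H1 H2]. apply is_series_Reals in H1. apply is_series_Reals in H2.
  apply C_ext; simpl; symmetry; apply is_series_unique; auto.
Qed.

Lemma dot_vlin_l a x w y : l2 x -> l2 w -> l2 y ->
  dot (vlin a x w) y = Cadd (Cmul a (dot x y)) (dot w y).
Proof.
  intros Hx Hw Hy. destruct a as [a1 a2].
  assert (Hre := ex_series_dot_re x y Hx Hy). assert (Him := ex_series_dot_im x y Hx Hy).
  assert (Hwre := ex_series_dot_re w y Hw Hy). assert (Hwim := ex_series_dot_im w y Hw Hy).
  apply C_ext; simpl.
  - rewrite (Series_ext _ (fun n => a1 * dot_re x y n + ((- a2) * dot_im x y n + dot_re w y n))).
    + rewrite Series_lin, Series_lin; auto using ex_series_lin. ring.
    + intros n. unfold dot_re, dot_im, vlin. destruct (x n), (w n), (y n).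
      unfold Cmul, Cconj, Cadd; simpl. ring.
  - rewrite (Series_ext _ (fun n => a1 * dot_im x y n + (a2 * dot_re x y n + dot_im w y n))).
    + rewrite Series_lin, Series_lin; auto using ex_series_lin. ring.
    + intros n. unfold dot_re, dot_im, vlin. destruct (x n), (w n), (y n).
      unfold Cmul, Cconj, Cadd; simpl. ring.
Qed.

Lemma dot_conj x y : dot y x = Cconj (dot x y).
Proof.
  apply C_ext; simpl.
  - apply Series_ext. intros n; unfold dot_re; destruct (x n), (y n).
    unfold Cmul, Cconj; simpl; ring.
  - rewrite <- Series_opp. apply Series_ext. intros n; unfold dot_im; destruct (x n), (y n).
    unfold Cmul, Cconj; simpl; ring.
Qed.

Lemma dot_zerov_l y : dot zerov y = C0.
Proof.
  apply C_ext; simpl; rewrite <- Series_zero; apply Series_ext;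
  intros n; unfold dot_re, dot_im, zerov, Cmul, Cconj, C0; simpl; ring.
Qed.

Lemma dot_self x : dot x x = Creal (norm2 x).
Proof.
  apply C_ext; simpl.
  - apply Series_ext. intros n; unfold dot_re, abs2; destruct (x n).
    unfold Cmul, Cconj, Cnorm2; simpl; ring.
  - rewrite <- Series_zero. apply Series_ext. intros n; unfold dot_im; destruct (x n).
    unfold Cmul, Cconj; simpl; ring.
Qed.

Lemma norm2_nonneg x : l2 x -> 0 <= norm2 x.
Proof.
  intros H. apply (Rle_trans _ (rsum 0 (abs2 x))); [simpl; lra|].
  apply rsum_le_Series; auto using abs2_nonneg.
Qed.

Lemma norm2_eq0 x : l2 x -> norm2 x = 0 -> forall n, x n = C0.
Proof.
  intros H H0 n. apply Cnorm2_eq0.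
  assert (rsum (S n) (abs2 x) <= norm2 x) by (apply rsum_le_Series; auto using abs2_nonneg).
  assert (0 <= rsum n (abs2 x)) by (apply rsum_nonneg, abs2_nonneg).
  pose proof (Cnorm2_nonneg (x n)). simpl in *. unfold abs2 in *. lra.
Qed.

Lemma dot_norm2_eq0_r x y : l2 y -> norm2 y = 0 -> dot x y = C0.
Proof.
  intros H H0. pose proof (norm2_eq0 y H H0) as Hz.
  apply C_ext; simpl; rewrite <- Series_zero; apply Series_ext;
  intros n; unfold dot_re, dot_im; rewrite Hz; unfold Cmul, Cconj, C0; simpl; ring.
Qed.

Lemma norm2_vlin t a b : l2 a -> l2 b ->
  norm2 (vlin t b a) = norm2 a + 2 * fst (Cmul (Cconj t) (dot a b)) + Cnorm2 t * norm2 b.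
Proof.
  intros Ha Hb. destruct t as [t1 t2]. unfold norm2.
  rewrite (Series_ext _ (fun n => 1 * abs2 a n + ((2 * t1) * dot_re a b n
             + ((2 * t2) * dot_im a b n + (t1 * t1 + t2 * t2) * abs2 b n)))).
  - rewrite !Series_lin, Series_scal_l;
      try (repeat (apply ex_series_lin || apply ex_series_scal);
           auto using ex_series_dot_re, ex_series_dot_im; fail).
    unfold Cmul, Cconj, Cnorm2, dot; simpl; ring.
  - intros n. unfold abs2, dot_re, dot_im, vlin. destruct (a n), (b n).
    unfold Cnorm2, Cmul, Cadd, Cconj; simpl. ring.
Qed.

Lemma norm2_scale s r : l2 r -> norm2 (vlin s r zerov) = Cnorm2 s * norm2 r.
Proof.
  intros Hr. rewrite norm2_vlin, dot_zerov_l, norm2_zerov by auto using l2_zerov.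
  replace (Cmul (Cconj s) C0) with C0 by ring. simpl. ring.
Qed.

(** Minimise [norm2 (y - t x)] over [t]; the minimum value is nonnegative. *)
Lemma cauchy_schwarz x y : l2 x -> l2 y -> Cnorm2 (dot x y) <= norm2 x * norm2 y.
Proof.
  intros Hx Hy. pose proof (norm2_nonneg x Hx). pose proof (norm2_nonneg y Hy).
  destruct (Req_dec (norm2 y) 0) as [E|E].
  - rewrite (dot_norm2_eq0_r x y Hy E), Cnorm2_0, E. lra.
  - destruct (dot x y) as [p q] eqn:Ez.
    set (t := (- (p / norm2 y), - (q / norm2 y)) : C).
    assert (H1 := norm2_nonneg (vlin t y x) (l2_vlin t y x Hy Hx)).
    rewrite norm2_vlin, Ez in H1 by auto.
    unfold t, Cmul, Cconj, Cnorm2 in *; simpl in *.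
    set (b := norm2 y) in *. set (a := norm2 x) in *.
    assert (E1 : - (p / b) * p - - - (q / b) * q = - ((p * p + q * q) / b)) by (field; lra).
    assert (E2 : (- (p / b) * - (p / b) + - (q / b) * - (q / b)) * b = (p * p + q * q) / b)
      by (field; lra).
    rewrite E1, E2 in H1.
    assert (H5 : 0 <= (a - (p * p + q * q) / b) * b) by nra.
    replace ((a - (p * p + q * q) / b) * b) with (a * b - (p * p + q * q)) in H5
      by (field; lra).
    lra.
Qed.

(** * Finite linear combinations and orthonormal families *)

Fixpoint csum (m : nat) (h : nat -> C) : C :=
  match m with O => C0 | S m' => Cadd (csum m' h) (h m') end.

Lemma csum_ext m h k : (forall j, (j < m)%nat -> h j = k j) -> csum m h = csum m k.
Proof. induction m; simpl; intros; auto. rewrite IHm, H; auto. Qed.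

Lemma csum_add m h k : csum m (fun j => Cadd (h j) (k j)) = Cadd (csum m h) (csum m k).
Proof. induction m; simpl. ring. rewrite IHm. ring. Qed.

Lemma csum_scal m a h : csum m (fun j => Cmul a (h j)) = Cmul a (csum m h).
Proof. induction m; simpl. ring. rewrite IHm. ring. Qed.

Lemma Cconj_csum m h : Cconj (csum m h) = csum m (fun j => Cconj (h j)).
Proof. induction m; simpl. apply Cconj_0. rewrite Cconj_add, IHm. auto. Qed.

Lemma fst_csum m h : fst (csum m h) = rsum m (fun j => fst (h j)).
Proof. induction m; simpl; auto. rewrite <- IHm. auto. Qed.

Lemma csum_zero_tail m m' h : (forall n, (m <= n)%nat -> h n = C0) -> (m <= m')%nat ->
  csum m' h = csum m h.
Proof. intros H Hm. induction Hm; auto. simpl. rewrite IHHm, H; try lia. ring. Qed.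

Lemma csum_zero m h : (forall n, (n < m)%nat -> h n = C0) -> csum m h = C0.
Proof. induction m; simpl; intros; auto. rewrite IHm, H; auto. ring. Qed.

Lemma csum_delta m i (a : nat -> C) : (i < m)%nat ->
  csum m (fun j => Cmul (a j) (if Nat.eqb j i then C1 else C0)) = a i.
Proof.
  intros Hi. rewrite (csum_zero_tail (S i)); [simpl | | lia].
  - rewrite Nat.eqb_refl, csum_zero; [ring|].
    intros n Hn. destruct (Nat.eqb_spec n i); try lia. ring.
  - intros n Hn. destruct (Nat.eqb_spec n i); try lia. ring.
Qed.

Lemma csum_shift M f : csum (S M) f = Cadd (f 0%nat) (csum M (fun j => f (S j))).
Proof. induction M; simpl. ring. simpl in IHM. rewrite IHM. ring. Qed.

Definition lincomb (m : nat) (c : nat -> C) (F : nat -> vec) : vec :=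
  fun n => csum m (fun j => Cmul (c j) (F j n)).

Lemma lincomb_S m c F : lincomb (S m) c F = vlin (c m) (F m) (lincomb m c F).
Proof. apply functional_extensionality; intro n. unfold lincomb, vlin. simpl. ring. Qed.

Lemma l2_lincomb m c F : (forall j, (j < m)%nat -> l2 (F j)) -> l2 (lincomb m c F).
Proof.
  induction m; intros H.
  - exact l2_zerov.
  - rewrite lincomb_S. apply l2_vlin; auto.
Qed.

Lemma dot_lincomb_l m c F y : (forall j, (j < m)%nat -> l2 (F j)) -> l2 y ->
  dot (lincomb m c F) y = csum m (fun j => Cmul (c j) (dot (F j) y)).
Proof.
  induction m; intros H Hy.
  - apply dot_zerov_l.
  - rewrite lincomb_S, dot_vlin_l, IHm by auto using l2_lincomb. simpl. ring.
Qed.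

Lemma dot_lincomb_r m c F y : (forall j, (j < m)%nat -> l2 (F j)) -> l2 y ->
  dot y (lincomb m c F) = csum m (fun j => Cmul (Cconj (c j)) (dot y (F j))).
Proof.
  intros H Hy. rewrite dot_conj, dot_lincomb_l, Cconj_csum by auto.
  apply csum_ext. intros j Hj. rewrite Cconj_mul, <- dot_conj. auto.
Qed.

Definition orthonormal (c : nat) (F : nat -> vec) : Prop :=
  (forall j, (j < c)%nat -> l2 (F j)) /\
  (forall i j, (i < c)%nat -> (j < c)%nat ->
     dot (F i) (F j) = if Nat.eqb i j then C1 else C0).

Lemma orthonormal_norm2 c F j : orthonormal c F -> (j < c)%nat -> norm2 (F j) = 1.
Proof.
  intros [_ H] Hj. pose proof (dot_self (F j)) as E. rewrite H, Nat.eqb_refl in E by auto.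
  apply (f_equal fst) in E. simpl in E. lra.
Qed.

Lemma dot_lincomb_orthonormal c a F i : orthonormal c F -> (i < c)%nat ->
  dot (lincomb c a F) (F i) = a i.
Proof.
  intros [H1 H2] Hi. rewrite dot_lincomb_l by auto.
  rewrite (csum_ext _ _ (fun j => Cmul (a j) (if Nat.eqb j i then C1 else C0))).
  - apply csum_delta; auto.
  - intros j Hj. rewrite H2; auto.
Qed.

Lemma norm2_lincomb_orthonormal c a F : orthonormal c F ->
  norm2 (lincomb c a F) = rsum c (fun j => Cnorm2 (a j)).
Proof.
  intros HF. pose proof HF as [H1 _].
  assert (E : dot (lincomb c a F) (lincomb c a F) = csum c (fun j => Cmul (a j) (Cconj (a j)))).
  { rewrite dot_lincomb_l by auto using l2_lincomb. apply csum_ext. intros j Hj.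
    rewrite dot_conj, dot_lincomb_orthonormal; auto. }
  rewrite dot_self in E. apply (f_equal fst) in E. simpl in E. rewrite E, fst_csum.
  apply rsum_ext. intros. rewrite Cmul_conj. reflexivity.
Qed.

(** Expand [norm2 (y - z) >= 0] for the orthogonal projection [z] of [y]. *)
Lemma bessel c F y : orthonormal c F -> l2 y ->
  rsum c (fun j => Cnorm2 (dot y (F j))) <= norm2 y.
Proof.
  intros HF Hy. pose proof HF as [H1 _].
  set (a := fun j => dot y (F j)). set (z := lincomb c a F).
  assert (Hz : l2 z) by (apply l2_lincomb; auto).
  assert (H := norm2_nonneg (vlin (Copp C1) z y) (l2_vlin _ _ _ Hz Hy)).
  rewrite norm2_vlin in H by auto. unfold z in H at 2.
  rewrite norm2_lincomb_orthonormal in H by auto. unfold z in H.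
  rewrite dot_lincomb_r in H by auto.
  rewrite (csum_ext _ _ (fun j => Creal (Cnorm2 (a j)))) in H.
  - assert (E : forall w, fst (Cmul (Cconj (Copp C1)) w) = - fst w)
      by (intros [w1 w2]; unfold Cmul, Cconj, Copp, C1; simpl; ring).
    rewrite E, fst_csum in H. simpl in H.
    replace (Cnorm2 (Copp C1)) with 1 in H by (unfold Cnorm2, Copp, C1; simpl; ring).
    unfold a in H. lra.
  - intros j Hj. rewrite <- Cmul_conj. unfold a. ring.
Qed.

Definition in_span (M : nat) (G : nat -> vec) (v : vec) : Prop :=
  exists a, forall n, v n = lincomb M a G n.

Lemma in_span_eq M G v w : (forall n, v n = w n) -> in_span M G v -> in_span M G w.
Proof. intros E [a Ha]. exists a. intros n. rewrite <- E. auto. Qed.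

Lemma in_span_family_eq M G G' v : (forall j, (j < M)%nat -> G j = G' j) ->
  in_span M G v -> in_span M G' v.
Proof.
  intros E [a Ha]. exists a. intros n. rewrite Ha. unfold lincomb. apply csum_ext.
  intros j Hj. rewrite E; auto.
Qed.

Lemma in_span_zerov M G : in_span M G zerov.
Proof.
  exists (fun _ => C0). intros n. unfold lincomb, zerov.
  rewrite csum_zero; auto. intros; ring.
Qed.

Lemma in_span_vlin M G t x y : in_span M G x -> in_span M G y -> in_span M G (vlin t x y).
Proof.
  intros [a Ha] [b Hb]. exists (fun i => Cadd (Cmul t (a i)) (b i)). intros n.
  unfold vlin. rewrite Ha, Hb. unfold lincomb. rewrite <- csum_scal, <- csum_add.
  apply csum_ext. intros; ring.
Qed.

Lemma in_span_generator M G i : (i < M)%nat -> in_span M G (G i).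
Proof.
  intros Hi. exists (fun j => if Nat.eqb j i then C1 else C0). intros n. unfold lincomb.
  rewrite (csum_ext _ _ (fun j => Cmul (G j n) (if Nat.eqb j i then C1 else C0))).
  - rewrite csum_delta; auto.
  - intros j Hj. ring.
Qed.

Lemma in_span_le M M' G v : in_span M G v -> (M <= M')%nat -> in_span M' G v.
Proof.
  intros [a Ha] HM. exists (fun j => if Nat.ltb j M then a j else C0). intros n. rewrite Ha.
  unfold lincomb. rewrite (csum_zero_tail M M'); auto.
  - apply csum_ext. intros j Hj. destruct (Nat.ltb_spec j M); try lia. auto.
  - intros j Hj. destruct (Nat.ltb_spec j M); try lia. ring.
Qed.

Lemma in_span_lincomb M G c a v : (forall j, (j < c)%nat -> in_span M G (v j)) ->
  in_span M G (lincomb c a v).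
Proof.
  induction c; intros H.
  - apply (in_span_eq _ _ zerov); [reflexivity | apply in_span_zerov].
  - rewrite lincomb_S. apply in_span_vlin; auto.
Qed.

Lemma in_span_lincomb_self c F a : in_span c F (lincomb c a F).
Proof. apply in_span_lincomb. intros; apply in_span_generator; auto. Qed.

Lemma orthonormal_expansion c F v : orthonormal c F -> in_span c F v ->
  forall n, v n = lincomb c (fun j => dot v (F j)) F n.
Proof.
  intros HF [a Ha]. assert (E : v = lincomb c a F) by (apply functional_extensionality; auto).
  subst v. intros n. unfold lincomb at 2. apply csum_ext. intros j Hj.
  rewrite dot_lincomb_orthonormal; auto.
Qed.

Lemma dot_in_span_orthogonal c F v w : orthonormal c F -> in_span c F v -> l2 w ->
  (forall j, (j < c)%nat -> dot (F j) w = C0) -> dot v w = C0.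
Proof.
  intros [H1 _] [a Ha] Hw Hz.
  assert (E : v = lincomb c a F) by (apply functional_extensionality; auto).
  subst v. rewrite dot_lincomb_l by auto. apply csum_zero. intros j Hj. rewrite Hz; auto. ring.
Qed.

(** * Gram-Schmidt orthonormalisation *)

Definition extend (F : nat -> vec) (c : nat) (v : vec) : nat -> vec :=
  fun j => if Nat.eqb j c then v else F j.

Definition coords (F : nat -> vec) (y : vec) : nat -> C := fun j => dot y (F j).

Definition residual (c : nat) (F : nat -> vec) (y : vec) : vec :=
  vlin (Copp C1) (lincomb c (coords F y) F) y.

Definition normalize (r : vec) : vec := vlin (Creal (/ sqrt (norm2 r))) r zerov.

Lemma residual_decomp c F y n : y n = Cadd (lincomb c (coords F y) F n) (residual c F y n).
Proof. unfold residual, vlin. ring. Qed.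

Lemma l2_residual c F y : orthonormal c F -> l2 y -> l2 (residual c F y).
Proof. intros [HF _] Hy. apply l2_vlin; auto. apply l2_lincomb; auto. Qed.

Lemma dot_residual c F y i : orthonormal c F -> l2 y -> (i < c)%nat ->
  dot (residual c F y) (F i) = C0.
Proof.
  intros HF Hy Hi. pose proof HF as [H1 _]. unfold residual.
  rewrite dot_vlin_l, dot_lincomb_orthonormal by auto using l2_lincomb.
  unfold coords. ring.
Qed.

Lemma l2_normalize r : l2 r -> l2 (normalize r).
Proof. intros. apply l2_vlin; auto using l2_zerov. Qed.

Lemma norm2_normalize r : l2 r -> 0 < norm2 r -> norm2 (normalize r) = 1.
Proof.
  intros Hr Hp. unfold normalize. rewrite norm2_scale by auto. unfold Cnorm2, Creal; simpl.
  pose proof (sqrt_lt_R0 _ Hp). rewrite <- (sqrt_sqrt (norm2 r)) at 3 by lra.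
  field. lra.
Qed.

Lemma normalize_scale r n : 0 < norm2 r ->
  r n = vlin (Creal (sqrt (norm2 r))) (normalize r) zerov n.
Proof.
  intros Hp. pose proof (sqrt_lt_R0 _ Hp). unfold normalize, vlin, zerov.
  apply C_ext; destruct (r n); unfold Cadd, Cmul, Creal, C0; simpl; field; lra.
Qed.

Lemma orthonormal_extend c F r : orthonormal c F -> l2 r -> 0 < norm2 r ->
  (forall i, (i < c)%nat -> dot r (F i) = C0) -> orthonormal (S c) (extend F c (normalize r)).
Proof.
  intros [H1 H2] Hr Hp Hz.
  assert (Hf : forall i, (i < c)%nat -> dot (normalize r) (F i) = C0).
  { intros i Hi. unfold normalize. rewrite dot_vlin_l, Hz, dot_zerov_l by auto using l2_zerov.
    ring. }
  split.
  - intros j Hj. unfold extend. destruct (Nat.eqb_spec j c).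
    + apply l2_normalize; auto.
    + apply H1; lia.
  - intros i j Hi Hj. unfold extend.
    destruct (Nat.eqb_spec i c), (Nat.eqb_spec j c); subst.
    + rewrite Nat.eqb_refl, dot_self, norm2_normalize; auto.
    + destruct (Nat.eqb_spec c j); try lia. apply Hf; lia.
    + destruct (Nat.eqb_spec i c); try lia. rewrite dot_conj, Hf, Cconj_0; auto; lia.
    + apply H2; lia.
Qed.

Definition gs_step (p : nat * (nat -> vec)) (y : vec) : nat * (nat -> vec) :=
  let (c, F) := p in
  let r := residual c F y in
  if Rlt_dec 0 (norm2 r) then (S c, extend F c (normalize r)) else (c, F).

Fixpoint gram_schmidt (g : nat -> vec) (m : nat) : nat * (nat -> vec) :=
  match m with
  | O => (O, fun _ => zerov)
  | S m' => gs_step (gram_schmidt g m') (g m')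
  end.

Definition gs_invariant (g : nat -> vec) (m c : nat) (F : nat -> vec) : Prop :=
  orthonormal c F /\ (forall j, (j < c)%nat -> in_span m g (F j)) /\
  (forall i, (i < m)%nat -> in_span c F (g i)) /\ (c <= m)%nat.

Lemma gs_invariant_extend g m c F : gs_invariant g m c F -> l2 (g m) ->
  0 < norm2 (residual c F (g m)) ->
  gs_invariant g (S m) (S c) (extend F c (normalize (residual c F (g m)))).
Proof.
  intros (HO & HsF & Hsg & Hc) Hy Hp. set (r := residual c F (g m)) in *.
  assert (Hr : l2 r) by (apply l2_residual; auto).
  assert (Hlt : forall j, (j < c)%nat -> extend F c (normalize r) j = F j).
  { intros j Hj. unfold extend. destruct (Nat.eqb_spec j c); auto; lia. }
  assert (Hc' : extend F c (normalize r) c = normalize r)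
    by (unfold extend; rewrite Nat.eqb_refl; auto).
  assert (Hspann : in_span (S c) (extend F c (normalize r)) (normalize r))
    by (rewrite <- Hc' at 2; apply in_span_generator; lia).
  assert (HspanF : forall v, in_span c F v -> in_span (S c) (extend F c (normalize r)) v).
  { intros v Hv. apply (in_span_le c); [|lia].
    apply (in_span_family_eq c F); auto. intros; rewrite Hlt; auto. }
  assert (Hspanr : in_span (S c) (extend F c (normalize r)) r).
  { apply (in_span_eq _ _ (vlin (Creal (sqrt (norm2 r))) (normalize r) zerov)).
    - intros n. symmetry. apply normalize_scale; auto.
    - apply in_span_vlin; auto using in_span_zerov. }
  split; [|split; [|split]].
  - apply orthonormal_extend; auto. intros; apply dot_residual; auto.
  - intros j Hj. destruct (Nat.eq_dec j c) as [->|].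
    + rewrite Hc'. apply in_span_vlin; [|apply in_span_zerov]. unfold r, residual.
      apply in_span_vlin; [|apply in_span_generator; lia].
      apply in_span_lincomb. intros i Hi. apply (in_span_le m); auto.
    + rewrite Hlt by lia. apply (in_span_le m); auto. apply HsF; lia.
  - intros i Hi. destruct (Nat.eq_dec i m) as [->|].
    + apply (in_span_eq _ _ (vlin C1 (lincomb c (coords F (g m)) F) r)).
      * intros n. unfold vlin. rewrite (residual_decomp c F (g m) n). fold r. ring.
      * apply in_span_vlin; auto. apply HspanF, in_span_lincomb_self.
    + apply HspanF, Hsg. lia.
  - lia.
Qed.

Lemma gs_invariant_keep g m c F : gs_invariant g m c F -> l2 (g m) ->
  ~ 0 < norm2 (residual c F (g m)) -> gs_invariant g (S m) c F.
Proof.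
  intros (HO & HsF & Hsg & Hc) Hy Hp.
  assert (Hr : l2 (residual c F (g m))) by (apply l2_residual; auto).
  assert (Hz : forall n, residual c F (g m) n = C0).
  { apply norm2_eq0; auto. pose proof (norm2_nonneg _ Hr). lra. }
  split; [|split; [|split]]; auto.
  - intros j Hj. apply (in_span_le m); auto.
  - intros i Hi. destruct (Nat.eq_dec i m) as [->|]; [|apply Hsg; lia].
    apply (in_span_eq _ _ (lincomb c (coords F (g m)) F)).
    + intros n. rewrite (residual_decomp c F (g m) n), Hz. ring.
    + apply in_span_lincomb_self.
Qed.

Lemma gram_schmidt_invariant g m : (forall i, l2 (g i)) ->
  let (c, F) := gram_schmidt g m in gs_invariant g m c F.
Proof.
  intros Hg. induction m; simpl.
  - split; [split|split; [|split]]; intros; lia.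
  - destruct (gram_schmidt g m) as [c F]. simpl.
    destruct (Rlt_dec _ _).
    + apply gs_invariant_extend; auto.
    + apply gs_invariant_keep; auto.
Qed.

Lemma gram_schmidt_prefix g m m' : (m <= m')%nat ->
  (fst (gram_schmidt g m) <= fst (gram_schmidt g m'))%nat /\
  forall j, (j < fst (gram_schmidt g m))%nat ->
    snd (gram_schmidt g m') j = snd (gram_schmidt g m) j.
Proof.
  intros H. induction H as [|p Hp [IH1 IH2]]; [split; auto|]. simpl.
  destruct (gram_schmidt g p) as [c F]. simpl in *.
  destruct (Rlt_dec _ _); simpl; split; auto; try lia.
  intros j Hj. unfold extend. destruct (Nat.eqb_spec j c); try lia; auto.
Qed.

Definition basis_vec (k : nat) : vec := fun n => if Nat.eqb n k then C1 else C0.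

Lemma dot_basis_vec x k : dot x (basis_vec k) = x k.
Proof.
  assert (Hterm : forall n, Cmul (x n) (Cconj (basis_vec k n)) = if Nat.eqb n k then x k else C0).
  { intros n. unfold basis_vec. destruct (Nat.eqb_spec n k) as [->|];
    destruct (x _); apply C_ext; unfold Cmul, Cconj, C1, C0; simpl; ring. }
  assert (E : forall f : C -> R, f C0 = 0 ->
            Series (fun n => f (Cmul (x n) (Cconj (basis_vec k n)))) = f (x k)).
  { intros f Hf. rewrite (Series_ext _ (fun n => f (if Nat.eqb n k then x k else C0)))
      by (intros n; rewrite Hterm; reflexivity).
    rewrite (is_series_unique _ (rsum (S k) (fun n => f (if Nat.eqb n k then x k else C0)))).
    - rewrite (rsum_single (S k) k); [now rewrite Nat.eqb_refl | lia |].
      intros n Hn. destruct (Nat.eqb_spec n k); [lia | auto].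
    - apply is_series_rsum. intros n Hn. destruct (Nat.eqb_spec n k); [lia | auto]. }
  apply C_ext; [apply (E fst) | apply (E snd)]; reflexivity.
Qed.

Lemma norm2_basis_vec k : norm2 (basis_vec k) = 1.
Proof.
  pose proof (dot_self (basis_vec k)) as E. rewrite dot_basis_vec in E.
  replace (basis_vec k k) with C1 in E by (unfold basis_vec; now rewrite Nat.eqb_refl).
  apply (f_equal fst) in E. simpl in E. lra.
Qed.

(** Counting squared coordinates:
    [k+1 = sum_(i<=k) sum_(j<c) |f_j(i)|^2 <= sum_(j<c) |f_j|^2 = c]. *)
Lemma orthonormal_spanning_basis_vec c F k : orthonormal c F ->
  (forall i, (i <= k)%nat -> in_span c F (basis_vec i)) -> (S k <= c)%nat.
Proof.
  intros HF Hspan. pose proof HF as [HF1 _].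
  assert (Hrow : forall i, (i <= k)%nat -> rsum c (fun j => abs2 (F j) i) = 1).
  { intros i Hi. rewrite <- (norm2_basis_vec i).
    assert (E : basis_vec i = lincomb c (fun j => dot (basis_vec i) (F j)) F)
      by (apply functional_extensionality, orthonormal_expansion; auto).
    rewrite E, norm2_lincomb_orthonormal by auto. apply rsum_ext. intros j Hj.
    rewrite dot_conj, Cnorm2_conj, dot_basis_vec. reflexivity. }
  assert (Hcol : forall j, (j < c)%nat -> rsum (S k) (abs2 (F j)) <= 1).
  { intros j Hj. rewrite <- (orthonormal_norm2 c F j HF Hj).
    apply rsum_le_Series; [apply abs2_nonneg | apply HF1; auto]. }
  assert (Htot : INR (S k) = rsum c (fun j => rsum (S k) (abs2 (F j)))).
  { rewrite <- rsum_swap, <- (Rmult_1_r (INR (S k))), <- rsum_const.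
    apply rsum_ext. intros i Hi. symmetry. apply Hrow. lia. }
  assert (Hle : rsum c (fun j => rsum (S k) (abs2 (F j))) <= rsum c (fun _ => 1))
    by (apply rsum_le; auto).
  rewrite rsum_const in Hle. apply INR_le. lra.
Qed.

(** * The unitary attached to an exhausting sequence *)

Section ExhaustingSequence.

Variable g : nat -> vec.
Hypothesis g_l2 : forall i, l2 (g i).
Variable stage : nat -> nat.
Hypothesis stage_mono : forall k k', (k <= k')%nat -> (stage k <= stage k')%nat.
Hypothesis basis_vec_in_stage :
  forall k i, (i <= k)%nat -> in_span (stage k) g (basis_vec i).

Definition gs_count (m : nat) : nat := fst (gram_schmidt g m).
Definition gs_family (m : nat) : nat -> vec := snd (gram_schmidt g m).

(** The Gram-Schmidt families of increasing length extend each other; [gs_basis]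
    is their union, read off at a stage where index [j] is already reached. *)
Definition gs_basis (j : nat) : vec := gs_family (stage j) j.
Definition gs_rank (k : nat) : nat := gs_count (stage k).

Lemma gs_family_invariant m : gs_invariant g m (gs_count m) (gs_family m).
Proof.
  pose proof (gram_schmidt_invariant g m g_l2) as H. unfold gs_count, gs_family.
  destruct (gram_schmidt g m). exact H.
Qed.

Lemma in_span_gs_family m v : in_span m g v -> in_span (gs_count m) (gs_family m) v.
Proof.
  intros [a Ha]. apply (in_span_eq _ _ (lincomb m a g)); [intros n; symmetry; auto|].
  apply in_span_lincomb. intros j Hj. apply (gs_family_invariant m); auto.
Qed.

Lemma gs_rank_gt k : (k < gs_rank k)%nat.
Proof.
  apply (orthonormal_spanning_basis_vec _ (gs_family (stage k))).
  - apply gs_family_invariant.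
  - intros i Hi. apply in_span_gs_family, basis_vec_in_stage; auto.
Qed.

Lemma gs_rank_le_stage k : (gs_rank k <= stage k)%nat.
Proof. apply gs_family_invariant. Qed.

Lemma gs_rank_mono k k' : (k <= k')%nat -> (gs_rank k <= gs_rank k')%nat.
Proof. intros H. apply gram_schmidt_prefix, stage_mono, H. Qed.

Lemma gs_basis_eq m j : (j < gs_count m)%nat -> gs_basis j = gs_family m j.
Proof.
  intros Hj. pose proof (gs_rank_gt j). unfold gs_basis.
  destruct (gram_schmidt_prefix g (stage j) (max m (stage j))) as [_ P1]; [lia|].
  destruct (gram_schmidt_prefix g m (max m (stage j))) as [_ P2]; [lia|].
  unfold gs_family. rewrite <- P1, <- P2; auto.
Qed.

Lemma orthonormal_gs_basis c : orthonormal c gs_basis.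
Proof.
  pose proof (gs_rank_gt c) as Hc. unfold gs_rank in Hc.
  destruct (gs_family_invariant (stage c)) as [[H1 H2] _].
  split; intros; rewrite !(gs_basis_eq (stage c)) by lia; [apply H1 | apply H2]; lia.
Qed.

Lemma l2_gs_basis j : l2 (gs_basis j).
Proof. apply (orthonormal_gs_basis (S j)). lia. Qed.

Lemma dot_gs_basis i j : dot (gs_basis i) (gs_basis j) = if Nat.eqb i j then C1 else C0.
Proof. apply (orthonormal_gs_basis (S (max i j))); lia. Qed.

Lemma in_span_gs_basis k v : in_span (stage k) g v -> in_span (gs_rank k) gs_basis v.
Proof.
  intros H. apply (in_span_family_eq _ (gs_family (stage k))).
  - intros j Hj. symmetry. apply gs_basis_eq. auto.
  - apply in_span_gs_family. auto.
Qed.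

(** [e_n] lies in the span of the first [gs_rank n] basis vectors, hence is
    orthogonal to the later ones. *)
Lemma gs_basis_zero n j : (gs_rank n <= j)%nat -> gs_basis j n = C0.
Proof.
  intros Hj. rewrite <- (dot_basis_vec (gs_basis j) n), dot_conj.
  rewrite (dot_in_span_orthogonal (gs_rank n) gs_basis).
  - apply Cconj_0.
  - apply orthonormal_gs_basis.
  - apply in_span_gs_basis, basis_vec_in_stage; auto.
  - apply l2_gs_basis.
  - intros j' Hj'. rewrite dot_gs_basis. destruct (Nat.eqb_spec j' j); auto; lia.
Qed.

Definition synthesis (x : vec) : vec :=
  fun n => csum (gs_rank n) (fun j => Cmul (x j) (gs_basis j n)).
Definition analysis (y : vec) : vec := fun j => dot y (gs_basis j).

Lemma synthesis_lincomb x n M : (gs_rank n <= M)%nat -> synthesis x n = lincomb M x gs_basis n.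
Proof.
  intros H. unfold synthesis, lincomb. symmetry. apply csum_zero_tail; auto.
  intros j Hj. rewrite gs_basis_zero; auto. ring.
Qed.

Lemma synthesis_vlin a x y n :
  synthesis (vlin a x y) n = Cadd (Cmul a (synthesis x n)) (synthesis y n).
Proof. unfold synthesis, vlin. rewrite <- csum_scal, <- csum_add. apply csum_ext. intros; ring. Qed.

Lemma rsum_abs2_synthesis_le x : l2 x -> forall N, rsum N (abs2 (synthesis x)) <= norm2 x.
Proof.
  intros Hx N. set (z := lincomb (gs_rank N) x gs_basis).
  assert (Hz : l2 z) by (apply l2_lincomb; intros; apply l2_gs_basis).
  rewrite (rsum_ext N _ (abs2 z)).
  - apply (Rle_trans _ (norm2 z)); [apply rsum_le_Series; auto using abs2_nonneg|].
    unfold z. rewrite norm2_lincomb_orthonormal by apply orthonormal_gs_basis.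
    apply rsum_le_Series; auto. intros; apply Cnorm2_nonneg.
  - intros n Hn. unfold abs2, z. rewrite (synthesis_lincomb x n (gs_rank N)); auto.
    apply gs_rank_mono. lia.
Qed.

Lemma l2_synthesis x : l2 x -> l2 (synthesis x).
Proof.
  intros Hx. apply (ex_series_of_rsum_le _ (norm2 x)); auto using abs2_nonneg.
  apply rsum_abs2_synthesis_le; auto.
Qed.

Lemma norm2_synthesis_le x : l2 x -> norm2 (synthesis x) <= norm2 x.
Proof.
  intros Hx. apply Series_le_of_rsum_le; [apply l2_synthesis | apply rsum_abs2_synthesis_le]; auto.
Qed.

Lemma l2_analysis y : l2 y -> l2 (analysis y).
Proof.
  intros Hy. apply (ex_series_of_rsum_le _ (norm2 y)); auto using abs2_nonneg.
  intros m. apply bessel; auto using orthonormal_gs_basis.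
Qed.

Lemma norm2_analysis_le y : l2 y -> norm2 (analysis y) <= norm2 y.
Proof.
  intros Hy. apply Series_le_of_rsum_le; [apply l2_analysis; auto|].
  intros m. apply bessel; auto using orthonormal_gs_basis.
Qed.

Definition truncv (m : nat) (x : vec) : vec := fun j => if Nat.ltb j m then x j else C0.
Definition tailv (m : nat) (x : vec) : vec := fun j => if Nat.ltb j m then C0 else x j.

Lemma l2_tailv m x : l2 x -> l2 (tailv m x).
Proof.
  intros Hx. apply (ex_series_Rabs_le _ (abs2 x)); auto. intros n. unfold abs2, tailv.
  rewrite Rabs_pos_eq by apply Cnorm2_nonneg.
  destruct (Nat.ltb n m); [rewrite Cnorm2_0; apply Cnorm2_nonneg | lra].
Qed.

Lemma norm2_tailv m x : l2 x -> norm2 (tailv m x) = norm2 x - rsum m (abs2 x).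
Proof.
  intros Hx. unfold norm2.
  assert (Ht : is_series (abs2 (truncv m x)) (rsum m (abs2 x))).
  { rewrite (rsum_ext m _ (abs2 (truncv m x))).
    - apply is_series_rsum. intros n Hn. unfold abs2, truncv.
      destruct (Nat.ltb_spec n m); try lia. apply Cnorm2_0.
    - intros n Hn. unfold abs2, truncv. destruct (Nat.ltb_spec n m); try lia; auto. }
  rewrite (Series_ext _ (fun n => (-1) * abs2 (truncv m x) n + abs2 x n)).
  - rewrite Series_lin, (is_series_unique _ _ Ht); [ring | eexists; eauto | auto].
  - intros n. unfold abs2, truncv, tailv. destruct (Nat.ltb n m); rewrite ?Cnorm2_0; ring.
Qed.

Lemma norm2_tailv_lt x eps : l2 x -> 0 < eps ->
  exists m0, forall m, (m0 <= m)%nat -> norm2 (tailv m x) < eps.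
Proof.
  intros Hx Heps. destruct (Series_rsum_close (abs2 x) eps Hx Heps) as [m0 Hm0].
  exists m0. intros m Hm. rewrite norm2_tailv by auto.
  specialize (Hm0 m Hm). apply Rabs_def2 in Hm0. unfold norm2. lra.
Qed.

Lemma synthesis_truncv m x n : synthesis (truncv m x) n = lincomb m x gs_basis n.
Proof.
  rewrite (synthesis_lincomb _ n (gs_rank n + m)) by lia. unfold lincomb.
  rewrite (csum_zero_tail m (gs_rank n + m)); try lia.
  - apply csum_ext. intros j Hj. unfold truncv. destruct (Nat.ltb_spec j m); try lia. auto.
  - intros j Hj. unfold truncv. destruct (Nat.ltb_spec j m); try lia. ring.
Qed.

Lemma synthesis_truncv_tailv m x n :
  synthesis x n = Cadd (Cmul C1 (synthesis (truncv m x) n)) (synthesis (tailv m x) n).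
Proof.
  unfold synthesis. rewrite <- csum_scal, <- csum_add. apply csum_ext. intros j Hj.
  unfold truncv, tailv. destruct (Nat.ltb j m); ring.
Qed.

Lemma dot_synthesis_gs_basis_approx m x j : l2 x -> (j < m)%nat ->
  Cnorm2 (Csub (dot (synthesis x) (gs_basis j)) (x j)) <= norm2 (tailv m x).
Proof.
  intros Hx Hj.
  assert (Htail : l2 (tailv m x)) by (apply l2_tailv; auto).
  assert (E : synthesis x = vlin C1 (lincomb m x gs_basis) (synthesis (tailv m x))).
  { apply functional_extensionality. intros n.
    rewrite (synthesis_truncv_tailv m), synthesis_truncv. reflexivity. }
  rewrite E, dot_vlin_l, dot_lincomb_orthonormal; auto using l2_gs_basis, l2_synthesis,
    orthonormal_gs_basis.
  2: { apply l2_lincomb. intros; apply l2_gs_basis. }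
  replace (Csub (Cadd (Cmul C1 (x j)) (dot (synthesis (tailv m x)) (gs_basis j))) (x j))
    with (dot (synthesis (tailv m x)) (gs_basis j)) by ring.
  eapply Rle_trans; [apply cauchy_schwarz; auto using l2_synthesis, l2_gs_basis|].
  rewrite (orthonormal_norm2 (S j) gs_basis j) by (auto using orthonormal_gs_basis).
  pose proof (norm2_synthesis_le (tailv m x) Htail). lra.
Qed.

Lemma analysis_synthesis x j : l2 x -> analysis (synthesis x) j = x j.
Proof.
  intros Hx. unfold analysis.
  assert (Hd : Csub (dot (synthesis x) (gs_basis j)) (x j) = C0).
  { apply Cnorm2_le_all_pos. intros eps Heps.
    destruct (norm2_tailv_lt x eps Hx Heps) as [m0 Hm0].
    eapply Rle_trans; [apply (dot_synthesis_gs_basis_approx (max m0 (S j))); auto; lia|].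
    apply Rlt_le, Hm0. lia. }
  replace (dot (synthesis x) (gs_basis j))
    with (Cadd (Csub (dot (synthesis x) (gs_basis j)) (x j)) (x j)) by ring.
  rewrite Hd. ring.
Qed.

Lemma synthesis_analysis y n : l2 y -> synthesis (analysis y) n = y n.
Proof.
  intros Hy. rewrite <- (dot_basis_vec y n).
  assert (E : basis_vec n = lincomb (gs_rank n) (fun j => dot (basis_vec n) (gs_basis j)) gs_basis).
  { apply functional_extensionality. apply orthonormal_expansion; [apply orthonormal_gs_basis|].
    apply in_span_gs_basis, basis_vec_in_stage; auto. }
  rewrite E, dot_lincomb_r by auto using l2_gs_basis.
  unfold synthesis, analysis. apply csum_ext. intros j Hj.
  rewrite <- dot_conj, dot_basis_vec. ring.
Qed.

Lemma norm2_synthesis x : l2 x -> norm2 (synthesis x) = norm2 x.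
Proof.
  intros Hx. apply Rle_antisym; [apply norm2_synthesis_le; auto|].
  assert (E : analysis (synthesis x) = x)
    by (apply functional_extensionality; intros; apply analysis_synthesis; auto).
  rewrite <- E at 1. apply norm2_analysis_le, l2_synthesis; auto.
Qed.

(** Polarisation: an isometry preserves [Re (conj t <x, w>)] for all [t]; take [t = 1, i]. *)
Lemma dot_synthesis x w : l2 x -> l2 w -> dot (synthesis x) (synthesis w) = dot x w.
Proof.
  intros Hx Hw.
  assert (Ht : forall t, fst (Cmul (Cconj t) (dot (synthesis x) (synthesis w))) =
                         fst (Cmul (Cconj t) (dot x w))).
  { intros t. pose proof (norm2_synthesis (vlin t w x) (l2_vlin _ _ _ Hw Hx)) as H.
    replace (synthesis (vlin t w x)) with (vlin t (synthesis w) (synthesis x)) in H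
      by (apply functional_extensionality; intros; symmetry; apply synthesis_vlin).
    rewrite !norm2_vlin, !norm2_synthesis in H; auto using l2_synthesis. lra. }
  pose proof (Ht C1) as H1. pose proof (Ht Ci) as H2.
  destruct (dot (synthesis x) (synthesis w)) as [a b], (dot x w) as [c e].
  unfold Cmul, Cconj, C1, Ci in H1, H2; simpl in H1, H2. apply C_ext; simpl; lra.
Qed.

Lemma bounded_op_synthesis : bounded_op synthesis.
Proof.
  split; [|split].
  - intros x Hx. apply in_H_l2, l2_synthesis, in_H_l2; auto.
  - intros a x y _ _ n. apply synthesis_vlin.
  - exists 1. intros x s t Hx Hs Ht. apply norm2_sum_norm2 in Hs, Ht. subst.
    pose proof (norm2_synthesis_le x (proj1 (in_H_l2 x) Hx)). lra.
Qed.

Lemma bounded_op_analysis : bounded_op analysis.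
Proof.
  split; [|split].
  - intros x Hx. apply in_H_l2, l2_analysis, in_H_l2; auto.
  - intros a x y Hx Hy n. apply in_H_l2 in Hx, Hy. apply dot_vlin_l; auto using l2_gs_basis.
  - exists 1. intros x s t Hx Hs Ht. apply norm2_sum_norm2 in Hs, Ht. subst.
    pose proof (norm2_analysis_le x (proj1 (in_H_l2 x) Hx)). lra.
Qed.

Lemma unitary_synthesis : unitary synthesis analysis.
Proof.
  split; [split; [|split]|split].
  - apply bounded_op_synthesis.
  - apply bounded_op_analysis.
  - intros x y z Hx Hy. apply in_H_l2 in Hx, Hy.
    assert (E : dot (synthesis x) y = dot x (analysis y)).
    { replace y with (synthesis (analysis y)) at 1
        by (apply functional_extensionality; intros; apply synthesis_analysis; auto).
      apply dot_synthesis; auto using l2_analysis. }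
    split; intros H; apply inner_eq_dot in H; subst z.
    + rewrite E. apply inner_dot; auto using l2_analysis.
    + rewrite <- E. apply inner_dot; auto using l2_synthesis.
  - intros x Hx n. apply synthesis_analysis, in_H_l2; auto.
  - intros x Hx n. apply analysis_synthesis, in_H_l2; auto.
Qed.

Lemma synthesis_in_stage k x : in_span_e (S k) x -> in_span (stage k) g (synthesis x).
Proof.
  intros Hx. pose proof (gs_rank_gt k).
  apply (in_span_eq _ _ (lincomb (S k) x gs_basis)).
  - intros n. rewrite (synthesis_lincomb x n (gs_rank n + S k)) by lia. unfold lincomb.
    symmetry. apply csum_zero_tail; try lia. intros j Hj. rewrite Hx by lia. ring.
  - apply in_span_lincomb. intros j Hj.
    rewrite (gs_basis_eq (stage k)) by (unfold gs_rank in *; lia).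
    apply gs_family_invariant. unfold gs_rank in *; lia.
Qed.

Lemma analysis_in_span_e k v : in_span (stage k) g v -> in_span_e (stage k) (analysis v).
Proof.
  intros Hv n Hn. pose proof (gs_rank_le_stage k). unfold analysis.
  apply (dot_in_span_orthogonal (gs_rank k) gs_basis).
  - apply orthonormal_gs_basis.
  - apply in_span_gs_basis; auto.
  - apply l2_gs_basis.
  - intros j Hj. rewrite dot_gs_basis. destruct (Nat.eqb_spec j n); auto; lia.
Qed.

End ExhaustingSequence.

(** * Words in the letters [0..d] and the spaces [V_k^X] *)

Fixpoint words_of_length (d n : nat) : list (list nat) :=
  match n with
  | O => [nil]
  | S n' => flat_map (fun a => map (cons a) (words_of_length d n')) (seq 0 (S d))
  end.

Fixpoint words_upto (d k : nat) : list (list nat) :=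
  match k with
  | O => words_of_length d 0
  | S k' => words_upto d k' ++ words_of_length d (S k')
  end.

Lemma length_words_of_length d n : length (words_of_length d n) = Nat.pow (S d) n.
Proof.
  assert (Hflat : forall (l : list nat) (L : list (list nat)),
            length (flat_map (fun a => map (cons a) L) l) = (length l * length L)%nat).
  { induction l; intros L; simpl; auto. rewrite length_app, length_map, IHl. lia. }
  induction n; [reflexivity|]. unfold words_of_length; fold words_of_length.
  rewrite Hflat, length_seq, IHn. simpl. lia.
Qed.

Lemma length_words_upto d k : length (words_upto d k) = alpha k d.
Proof.
  induction k; [reflexivity|]. unfold words_upto; fold words_upto.
  rewrite length_app, IHk, length_words_of_length. auto.
Qed.

Lemma In_words_of_length d n w :
  In w (words_of_length d n) <-> length w = n /\ Forall (fun a => (a <= d)%nat) w.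
Proof.
  revert w; induction n; intros w.
  - simpl. split; [intros [<-|[]]; auto | intros [H _]; destruct w; simpl in *; auto; lia].
  - unfold words_of_length; fold words_of_length. rewrite in_flat_map. split.
    + intros [a [Ha Hw]]. apply in_map_iff in Hw. destruct Hw as [w' [<- Hw']].
      apply IHn in Hw'. destruct Hw'. apply in_seq in Ha.
      simpl. split; auto. constructor; auto; lia.
    + intros [Hl HF]. destruct w as [|a w']; simpl in Hl; try lia. inversion HF; subst.
      exists a. split; [apply in_seq; lia|]. apply in_map, IHn. split; auto.
Qed.

Lemma In_words_upto d k w :
  In w (words_upto d k) <-> (length w <= k)%nat /\ Forall (fun a => (a <= d)%nat) w.
Proof.
  induction k.
  - change (In w (words_of_length d 0) <-> (length w <= 0)%nat /\ Forall (fun a => (a <= d)%nat) w).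
    rewrite In_words_of_length. split; intros [H1 H2]; split; auto; lia.
  - unfold words_upto; fold words_upto. rewrite in_app_iff, IHk, In_words_of_length. split.
    + intros [[H1 H2]|[H1 H2]]; split; auto; lia.
    + intros [H1 H2]. destruct (Nat.eq_dec (length w) (S k)); [right | left]; split; auto; lia.
Qed.

Lemma words_upto_prefix d k k' : (k <= k')%nat -> exists l, words_upto d k' = words_upto d k ++ l.
Proof.
  intros H. induction H as [|p Hp [l IH]]; [exists nil; rewrite app_nil_r; auto|].
  exists (l ++ words_of_length d (S p)).
  unfold words_upto; fold words_upto. rewrite IH, app_assoc. auto.
Qed.

Lemma alpha_gt d k : (k < alpha k d)%nat.
Proof.
  induction k; simpl; [lia|]. pose proof (Nat.pow_nonzero (S d) (S k) ltac:(lia)).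
  simpl in *. lia.
Qed.

Lemma alpha_mono d k k' : (k <= k')%nat -> (alpha k d <= alpha k' d)%nat.
Proof. intros H; induction H; simpl; lia. Qed.

(** Any bound [k] with [i < alpha k d] gives the same word ([nth_word_spec]);
    [k = i] is one such bound. *)
Definition nth_word (d i : nat) : list nat := nth i (words_upto d i) nil.

Lemma nth_word_spec d k i : (i < alpha k d)%nat -> nth_word d i = nth i (words_upto d k) nil.
Proof.
  intros Hi. unfold nth_word.
  assert (Hn : forall k1 k2, (k1 <= k2)%nat -> (i < alpha k1 d)%nat ->
            nth i (words_upto d k2) nil = nth i (words_upto d k1) nil).
  { intros k1 k2 H12 Hlt. destruct (words_upto_prefix d k1 k2 H12) as [l ->].
    apply app_nth1. rewrite length_words_upto; auto. }
  pose proof (alpha_gt d i).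
  rewrite <- (Hn i (max i k)), (Hn k (max i k)); auto; lia.
Qed.

Lemma nth_word_In d k i : (i < alpha k d)%nat -> In (nth_word d i) (words_upto d k).
Proof.
  intros Hi. rewrite (nth_word_spec d k i Hi). apply nth_In. rewrite length_words_upto; auto.
Qed.

Lemma nth_word_surj d k w : (length w <= k)%nat -> Forall (fun a => (a <= d)%nat) w ->
  exists i, (i < alpha k d)%nat /\ nth_word d i = w.
Proof.
  intros H1 H2. assert (Hin : In w (words_upto d k)) by (apply In_words_upto; auto).
  destruct (In_nth _ _ nil Hin) as [i [Hi E]]. rewrite length_words_upto in Hi.
  exists i. split; auto. rewrite (nth_word_spec d k); auto.
Qed.

Definition word_vec (d : nat) (X : nat -> op) (i : nat) : vec := weval d X (nth_word d i) e1.

Lemma peval_map_nth_word d X (a : nat -> C) s M n :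
  peval d X (map (fun i => (a i, nth_word d i)) (seq s M)) e1 n =
  csum M (fun j => Cmul (a (s + j)%nat) (word_vec d X (s + j)%nat n)).
Proof.
  revert s; induction M; intros s; [reflexivity|].
  rewrite csum_shift. simpl. rewrite IHM, Nat.add_0_r. unfold word_vec.
  f_equal. apply csum_ext. intros j Hj. rewrite Nat.add_succ_r. reflexivity.
Qed.

Lemma in_Vk_in_span d X k v : in_Vk d X k v <-> in_span (alpha k d) (word_vec d X) v.
Proof.
  split.
  - intros [p [Hp Hv]]. apply (in_span_eq _ _ (peval d X p e1)); [intros n; symmetry; auto|].
    clear Hv. induction p as [|[c w] p IH].
    + apply (in_span_eq _ _ zerov); [reflexivity | apply in_span_zerov].
    + inversion Hp as [|? ? [Hl HF] Hp']; subst. simpl in Hl, HF.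
      apply (in_span_eq _ _ (vlin c (weval d X w e1) (peval d X p e1))); [reflexivity|].
      apply in_span_vlin; auto.
      destruct (nth_word_surj d k w Hl HF) as [i [Hi <-]].
      apply (in_span_generator _ (word_vec d X)); auto.
  - intros [a Ha]. exists (map (fun i => (a i, nth_word d i)) (seq 0 (alpha k d))). split.
    + apply Forall_forall. intros [c w] Hin. apply in_map_iff in Hin.
      destruct Hin as [i [E Hi]]. inversion E; subst. apply in_seq in Hi.
      apply In_words_upto, nth_word_In. lia.
    + intros n. rewrite peval_map_nth_word, Ha. reflexivity.
Qed.

Lemma l2_word_vec d X : (forall i, (i < d)%nat -> bounded_op (X i)) ->
  forall i, l2 (word_vec d X i).
Proof.
  intros HX i. unfold word_vec. induction (nth_word d i) as [|a w IH]; simpl.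
  - exists (rsum 1 (abs2 e1)). apply is_series_rsum. intros [|n] Hn; [lia|]. apply Cnorm2_0.
  - destruct (Nat.ltb_spec a d).
    + apply in_H_l2, (proj1 (HX a H)), in_H_l2. auto.
    + apply ex_series_incr_1. exact IH.
Qed.

Lemma weval_repeat_shift d X k n : weval d X (repeat d k) e1 n = basis_vec k n.
Proof.
  revert n; induction k; intros n; simpl; [reflexivity|].
  destruct (Nat.ltb_spec d d); try lia. destruct n; simpl; auto.
Qed.

Lemma basis_vec_in_Vk d X k i : (i <= k)%nat -> in_Vk d X k (basis_vec i).
Proof.
  intros Hi. exists [(C1, repeat d i)]. split.
  - constructor; [|constructor]. simpl. rewrite repeat_length. split; auto.
    apply Forall_forall. intros a Ha. apply repeat_spec in Ha. lia.
  - intros n. unfold peval. simpl. rewrite weval_repeat_shift. ring.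
Qed.

Theorem mainTheorem15 :
  forall (d : nat) (X : nat -> op),
    (forall i, (i < d)%nat -> bounded_op (X i)) ->
    exists u us : op,
      unitary u us /\
      forall k : nat,
        (forall x, in_span_e (S k) x -> in_Vk d X k (u x)) /\
        (forall v, in_Vk d X k v -> in_span_e (alpha k d) (us v)).
Proof.
  intros d X HX.
  set (g := word_vec d X). set (stage := fun k => alpha k d).
  assert (Hg : forall i, l2 (g i)) by (apply l2_word_vec; auto).
  assert (Hstage : forall k k', (k <= k')%nat -> (stage k <= stage k')%nat) by apply alpha_mono.
  assert (Hbasis : forall k i, (i <= k)%nat -> in_span (stage k) g (basis_vec i))
    by (intros; apply in_Vk_in_span, basis_vec_in_Vk; auto).
  exists (synthesis g stage), (analysis g stage). split.
  - apply unitary_synthesis; auto.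
  - intros k. split.
    + intros x Hx. apply in_Vk_in_span. change (in_span (stage k) g (synthesis g stage x)).
      apply synthesis_in_stage; auto.
    + intros v Hv. change (in_span_e (stage k) (analysis g stage v)).
      apply analysis_in_span_e; auto. apply in_Vk_in_span; auto.
Qed.
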